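(* Let $\Theta$ be a finite set, let $(A,u)$ be a decision problem and let $P_1,\dots,P_m$ be experiments. Then there exists a weak decomposition $(A_1^*,u_1^* ),\dots,(A_k^*,u_k^* )$ of $(A,u)$ (with finite action sets) such that $$V(P_1,\dots,P_m;(A,u))=\sum_{\ell=1}^k\max_{j=1,\dots,m}V(P_j;(A_\ell^*,u_\ell^* )).$$
   Context: $\Theta$ is a finite set of states. A decision problem is a pair $(A,u)$ with $A$ a finite nonempty action set and $u:\Theta\times A\to\mathbb{R}$; for $\alpha\in\Delta(A)$ write $u(\theta,\alpha)=\sum_a\alpha(a)u(\theta,a)$. An experiment is a map $P:\Theta\to\Delta(Y)$ with $Y$ a finite signal set. Given experiments $P_j:\Theta\to\Delta(Y_j)$, $j=1,\dots,m$, let $\mathbf Y=Y_1\times\cdots\times Y_m$ and let $\mathcal P(P_1,\dots,P_m)$ be the set of experiments $P:\Theta\to\Delta(\mathbf Y)$ whose $j$-th marginal is $P_j(\cdot|\theta)$ for every $\theta$ and $j$. A strategy is a map $\sigma:\mathbf Y\to\Delta(A)$. Define $V(P_1,\dots,P_m;(A,u))=\max_{\sigma}\min_{P\in\mathcal P(P_1,\dots,P_m)}\sum_{\theta}\sum_{\mathbf y}P(\mathbf y|\theta)u(\theta,\sigma(\mathbf y))$; for a single experiment, $V(P;(A,u))=\max_{\sigma:Y\to\Delta(A)}\sum_\theta\sum_y P(y|\theta)u(\theta,\sigma(y))$. The composition $\bigoplus_{\ell=1}^k(A_\ell,u_\ell)$ is the decision problem with action set $A_1\times\cdots\times A_k$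 and utility $u(\theta,(a_1,\dots,a_k))=\sum_\ell u_\ell(\theta,a_\ell)$. For a decision problem let $\mathcal H(A,u)=\mathrm{co}\{u(\cdot,a):a\in A\}-\mathbb{R}_+^{\Theta}$ (Minkowski difference). A decision problem $(A,u)$ admits a weak decomposition $\{(A_\ell,u_\ell)\}_{\ell=1}^k$ if $\mathcal H(\bigoplus_{\ell=1}^k(A_\ell,u_\ell))\subseteq\mathcal H(A,u)$. *)

From HB Require Import structures.
From mathcomp Require Import all_boot all_order all_algebra.
From mathcomp Require Import classical_sets boolp reals.
Set Implicit Arguments. Unset Strict Implicit. Unset Printing Implicit Defensive.
Import Order.TTheory GRing.Theory Num.Theory.
Local Open Scope ring_scope.
Local Open Scope classical_set_scope.

Section Defs.
Variables (R : realType) (Theta : finType).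

Definition is_dist (T : finType) (p : T -> R) : Prop :=
  (forall t, 0 <= p t) /\ \sum_(t : T) p t = 1.

Definition is_experiment (Y : finType) (P : Theta -> Y -> R) : Prop :=
  forall th, is_dist (P th).

Definition mixed_u (A : finType) (u : Theta -> A -> R) (th : Theta) (al : A -> R) : R :=
  \sum_(a : A) al a * u th a.

Definition payoff (Y A : finType) (u : Theta -> A -> R)
  (P : Theta -> Y -> R) (sigma : Y -> A -> R) : R :=
  \sum_(th : Theta) \sum_(y : Y) P th y * mixed_u u th (sigma y).

Definition is_strategy (Y A : finType) (sigma : Y -> A -> R) : Prop :=
  forall y, is_dist (sigma y).

Definition joint_sig (m : nat) (Y : 'I_m -> finType) : finType :=
  {dffun forall j : 'I_m, Y j}.

Definition coupling (m : nat) (Y : 'I_m -> finType)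
  (Ps : forall j : 'I_m, Theta -> Y j -> R) (P : Theta -> joint_sig Y -> R) : Prop :=
  is_experiment P /\
  forall th (j : 'I_m) (y : Y j),
    \sum_(yy : joint_sig Y | yy j == y) P th yy = Ps j th y.

Definition Vmulti (m : nat) (Y : 'I_m -> finType)
  (Ps : forall j : 'I_m, Theta -> Y j -> R) (A : finType) (u : Theta -> A -> R) : R :=
  sup [set v | exists sigma : joint_sig Y -> A -> R,
         is_strategy sigma /\
         v = inf [set w | exists P, coupling Ps P /\ w = payoff u P sigma]].

Definition Vsingle (Y : finType) (P : Theta -> Y -> R) (A : finType) (u : Theta -> A -> R) : R :=
  sup [set v | exists sigma : Y -> A -> R, is_strategy sigma /\ v = payoff u P sigma].

Record dproblem := DP {
  dp_act : finType;
  dp_u : Theta -> dp_act -> R;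
  dp_ne : (0 < #|dp_act|)%N }.
Arguments dp_u d th a : clear implicits.

Definition comp_act (k : nat) (D : 'I_k -> dproblem) : finType :=
  {dffun forall l : 'I_k, dp_act (D l)}.

Definition comp_u (k : nat) (D : 'I_k -> dproblem) (th : Theta) (a : comp_act D) : R :=
  \sum_(l < k) dp_u (D l) th (a l).
Arguments comp_u [k] D th a.

(* H(A,u) = co{u(.,a) : a in A} - R_+^Theta *)
Definition Hset (A : finType) (u : Theta -> A -> R) : set (Theta -> R) :=
  [set x | exists al : A -> R, is_dist al /\ forall th, x th <= mixed_u u th al].

Definition weak_decomposition (A : finType) (u : Theta -> A -> R)
  (k : nat) (D : 'I_k -> dproblem) : Prop :=
  Hset (comp_u D) `<=` Hset u.

End Defs.
Arguments dp_u {R Theta} d th a.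
Arguments comp_u {R Theta k} D th a.

From HB Require Import structures.
From mathcomp Require Import all_boot all_order all_algebra.
From mathcomp Require Import classical_sets boolp reals.
From mathcomp Require Import lra.
Import Order.TTheory GRing.Theory Num.Theory.
Local Open Scope ring_scope.
Set Implicit Arguments. Unset Strict Implicit. Unset Printing Implicit Defensive.

(* Write V := V(P_1, .., P_m; (A, u)).  The heart of the proof is a linear
   programming duality, obtained from Farkas' lemma (proved here by Fourier-Motzkin
   elimination): since against every coupling pi of P_1, .., P_m some strategy
   earns at least V, there are a strategy s on joint signals and functions
   g_j(th, y_j) of a single signal such that
     sum_j g_j(th, yy_j) <= u(th, s(yy))   and   V <= sum_j E_{P_j}[g_j]
   (dual_decomposition; a certificate of infeasibility would instead produce a
   coupling against which every strategy earns less than V).  The problems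
   (Y_j, g_j) form a weak decomposition of (A, u), because every composite action
   yy is dominated by the mixed action s(yy) (domination_weak_decomposition), and
   V <= sum_j V(P_j; (Y_j, g_j)) <= sum_l max_j V(P_j; (Y_l, g_l)).
   Conversely, for any dominated decomposition, combining for each component l a
   best single experiment with a pure best response to it yields a strategy on the
   joint signals whose payoff under every coupling is at least
   sum_l max_j V(P_j; D_l) (decomposition_value_le).  An empty state space is
   handled by the empty decomposition. *)

Section SumLemmas.
Variable R : comPzRingType.

Lemma sum_delta (C : finType) (p : C) (G : C -> R) :
  \sum_i (i == p)%:R * G i = G p.
Proof.
rewrite (bigD1 p) //= eqxx mul1r big1 ?addr0 // => i /negPf ->.
by rewrite mul0r.
Qed.

Lemma sum_delta_r (C : finType) (p : C) (G : C -> R) : \sum_i G i * (p == i)%:R = G p.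
Proof. by rewrite -(sum_delta p G); apply: eq_bigr => i _; rewrite mulrC eq_sym. Qed.

Lemma sum_mulN (C : finType) (G H : C -> R) : \sum_i G i * - H i = - \sum_i G i * H i.
Proof. by rewrite -sumrN; apply: eq_bigr => i _; rewrite mulrN. Qed.

Lemma sum_mul0 (C : finType) (G : C -> R) : \sum_i G i * 0 = 0.
Proof. by rewrite big1 // => i _; rewrite mulr0. Qed.

Lemma sum_mul_exchange (I J : finType) (c : I -> R) (M : I -> J -> R) (d : J -> R) :
  \sum_j (\sum_i c i * M i j) * d j = \sum_i c i * \sum_j M i j * d j.
Proof.
under eq_bigr do rewrite mulr_suml.
rewrite exchange_big; apply: eq_bigr => i _; rewrite mulr_sumr.
by apply: eq_bigr => j _; rewrite mulrA.
Qed.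

Lemma sum_pair (T1 T2 : finType) (F : T1 * T2 -> R) :
  \sum_p F p = \sum_a \sum_b F (a, b).
Proof. by rewrite pair_bigA; apply: eq_bigr => -[]. Qed.

End SumLemmas.

Lemma sum_dffun_prod (R : comPzSemiRingType) (I : finType) (T : I -> finType)
    (F : forall i, T i -> R) :
  \sum_(f : {dffun forall i, T i}) \prod_i F i (f i) = \prod_i \sum_(y : T i) F i y.
Proof.
rewrite (reindex (@dffun_of_fprod I T)); last exact/onW_bij/dffun_of_fprod_bij.
pose P_ i := [ffun y => F i y].
transitivity (\sum_(t : fprod T) \prod_(i in I) P_ i (t i)).
  by apply: eq_bigr => t _; apply: eq_bigr => i _; rewrite !ffunE.
rewrite big_fprod.
transitivity (\prod_i \sum_(y : T i) P_ i y); last first.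
  by apply: eq_bigr => i _; apply: eq_bigr => y _; rewrite ffunE.
under [RHS]eq_bigr => i _ do rewrite (big_tag (fun i y => P_ i y) i).
by rewrite bigA_distr_big_dep.
Qed.


Section Farkas.
Variable R : realFieldType.

Definition solves (V C : finType) (A : C -> V -> R) (b : C -> R) (x : V -> R) :=
  forall i, \sum_v A i v * x v <= b i.

(* A Farkas certificate: a nonnegative combination of the rows of  A x <= b
   that reads  0 <= (negative number),  so that the system has no solution. *)
Definition certificate (V C : finType) (A : C -> V -> R) (b : C -> R) (l : C -> R) :=
  [/\ forall i, 0 <= l i, forall v, \sum_i l i * A i v = 0 & \sum_i l i * b i < 0].

Lemma certificate_pullback (K C V : finType) (L : K -> C -> R)
    (A : C -> V -> R) (b : C -> R) (mu : K -> R) :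
  (forall k i, 0 <= L k i) ->
  certificate (fun k v => \sum_i L k i * A i v) (fun k => \sum_i L k i * b i) mu ->
  certificate A b (fun i => \sum_k mu k * L k i).
Proof.
move=> L_ge0 [mu_ge0 mu_col mu_val]; split.
- by move=> i; apply: sumr_ge0 => k _; apply: mulr_ge0.
- by move=> v; rewrite sum_mul_exchange; apply: mu_col.
- by rewrite sum_mul_exchange.
Qed.

Lemma exists_between (I : finType) (P Q : pred I) (f : I -> R) :
  (forall p q, P p -> Q q -> f q <= f p) ->
  exists t, (forall p, P p -> t <= f p) /\ (forall q, Q q -> f q <= t).
Proof.
move=> fQP; case: (pselect (exists p, P p)) => [[p0 Pp0]|noP].
  exists (\big[Num.min/f p0]_(p | P p) f p); split.
    by move=> p Pp; apply: bigmin_le_cond.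
  by move=> q Qq; apply: le_bigmin => [|p Pp]; apply: fQP.
exists (\big[Num.max/0]_(q | Q q) f q); split; last by move=> q Qq; apply: le_bigmax_cond.
by move=> p Pp; case: noP; exists p.
Qed.

Section FourierMotzkinStep.
Variables (V C : finType) (A : C -> V -> R) (b : C -> R) (v : V).

(* The rows of the system with the variable v eliminated: each row j of A with
   no v-term is kept ([inl j]), and each pair (p, q) of rows whose v-coefficients
   are positive and negative is combined so that v cancels ([inr (p, q)]).
   [fm_mult k] gives the (nonnegative) multipliers of the rows of A in row k. *)
Definition fm_mult (k : C + C * C) (i : C) : R :=
  match k with
  | inl j => ((i == j) && (A j v == 0))%:R
  | inr (p, q) => if (0 < A p v) && (A q v < 0)
      then (i == p)%:R * (- A q v) + (i == q)%:R * A p v else 0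
  end.

Lemma fm_mult_ge0 k i : 0 <= fm_mult k i.
Proof.
case: k => [j|[p q]] /=; first by rewrite ler0n.
case: ifP => // /andP[Ap Aq].
by rewrite addr_ge0 // mulr_ge0 ?ler0n ?oppr_ge0 ?ltW.
Qed.

Lemma fm_combination k (F : C -> R) : \sum_i fm_mult k i * F i =
  match k with
  | inl j => if A j v == 0 then F j else 0
  | inr (p, q) => if (0 < A p v) && (A q v < 0)
      then - A q v * F p + A p v * F q else 0
  end.
Proof.
case: k => [j|[p q]] /=.
  case: eqP => Aj; last by rewrite big1 // => i _; rewrite andbF mul0r.
  by rewrite -(sum_delta j F); apply: eq_bigr => i _; rewrite andbT.
case: ifP => _; last by rewrite big1 // => i _; rewrite mul0r.
under eq_bigr do rewrite mulrDl -!mulrA.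
by rewrite big_split /= !sum_delta.
Qed.

Definition fm_A k w := \sum_i fm_mult k i * A i w.
Definition fm_b k := \sum_i fm_mult k i * b i.

Lemma fm_A_pivot k : fm_A k v = 0.
Proof.
rewrite /fm_A fm_combination; case: k => [j|[p q]]; first by case: eqP.
by case: ifP => // _; rewrite mulNr mulrC addNr.
Qed.

(* Any solution of the eliminated system extends to a solution of A x <= b,
   by choosing the value of v between the bounds the rows impose on it. *)
Lemma fm_solution_lift x : solves fm_A fm_b x -> exists y, solves A b y.
Proof.
move=> x_sol.
pose r i := \sum_(w | w != v) A i w * x w.
pose bound i := (b i - r i) / A i v.
have dotE i : \sum_w A i w * x w = A i v * x v + r i by rewrite (bigD1 v).
have fm_dot k : \sum_i fm_mult k i * (A i v * x v + r i) <= fm_b k.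
  by have := x_sol k; rewrite /fm_A sum_mul_exchange; under eq_bigr do rewrite dotE.
have zero_row j : A j v = 0 -> r j <= b j.
  move=> Aj; have := fm_dot (inl j); rewrite /fm_b !fm_combination Aj eqxx.
  by rewrite mul0r add0r.
have bounds_ordered p q : 0 < A p v -> A q v < 0 -> bound q <= bound p.
  move=> Ap Aq; have := fm_dot (inr (p, q)); rewrite /fm_b !fm_combination Ap Aq /=.
  by move=> ineq; rewrite /bound ler_ndivrMr // mulrAC ler_pdivrMr //; nra.
have [t [t_le t_ge]] := exists_between bounds_ordered.
exists (fun w => if w == v then t else x w) => i.
rewrite (bigD1 v) //= eqxx.
rewrite (eq_bigr (fun w => A i w * x w)) => [|w /negPf -> //].
case: (ltgtP (A i v) 0) => Ai.
- by have := t_ge _ Ai; rewrite /bound ler_ndivrMr // => ?; rewrite -/(r i); lra.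
- by have := t_le _ Ai; rewrite /bound ler_pdivlMr // => ?; rewrite -/(r i); lra.
- by rewrite Ai mul0r add0r; apply: zero_row.
Qed.

End FourierMotzkinStep.

(* Farkas' lemma, by Fourier-Motzkin elimination of the variables in vs, the
   only ones with nonzero coefficients. *)
Lemma farkas_support (V : finType) (vs : seq V) : forall (C : finType)
    (A : C -> V -> R) (b : C -> R),
  (forall i w, w \notin vs -> A i w = 0) ->
  ~ (exists x, solves A b x) -> exists l, certificate A b l.
Proof.
elim: vs => [|v vs IH] C A b A_supp no_sol.
  have [i bi] : exists i, b i < 0.
    apply: contrapT => b_ge0; apply: no_sol; exists (fun _ => 0) => i.
    rewrite big1 => [|w _]; last by rewrite mulr0.
    by rewrite leNgt; apply/negP => bi; apply: b_ge0; exists i.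
  exists (fun j => (j == i)%:R); split => [j|w|]; first by rewrite ler0n.
    by rewrite big1 // => j _; rewrite A_supp ?mulr0.
  by rewrite sum_delta.
have fm_supp k w : w \notin vs -> fm_A A v k w = 0.
  move=> w_vs; have [->|w_v] := eqVneq w v; first exact: fm_A_pivot.
  rewrite /fm_A big1 // => i _; rewrite A_supp ?mulr0 //.
  by rewrite in_cons negb_or w_v.
have no_fm_sol : ~ exists x, solves (fm_A A v) (fm_b A b v) x.
  by case=> x /fm_solution_lift; exact: no_sol.
have [mu mu_cert] := IH _ _ _ fm_supp no_fm_sol.
exists (fun i => \sum_k mu k * fm_mult A v k i).
by apply: certificate_pullback mu_cert; apply: fm_mult_ge0.
Qed.

Lemma farkas (V C : finType) (A : C -> V -> R) (b : C -> R) :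
  ~ (exists x, solves A b x) -> exists l, certificate A b l.
Proof. by apply: (@farkas_support V (enum V)) => i w; rewrite mem_enum. Qed.

End Farkas.

Section Couplings.
Variables (R : realType) (Theta : finType) (m : nat) (Y : 'I_m -> finType).
Variable Ps : forall j : 'I_m, Theta -> Y j -> R.
Arguments Ps : clear implicits.

Lemma sum_joint_by_coord (j : 'I_m) (F : joint_sig Y -> R) :
  \sum_yy F yy = \sum_(y : Y j) \sum_(yy : joint_sig Y | yy j == y) F yy.
Proof. by rewrite (partition_big (fun yy : joint_sig Y => yy j) xpredT). Qed.

Lemma coupling_marginal P th j (G : Y j -> R) : coupling Ps P ->
  \sum_(yy : joint_sig Y) P th yy * G (yy j) = \sum_y Ps j th y * G y.
Proof.
case=> _ marg; rewrite (sum_joint_by_coord j); apply: eq_bigr => y _.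
by rewrite -marg mulr_suml; apply: eq_bigr => yy /eqP ->.
Qed.

Lemma product_coupling : (forall j, is_experiment (Ps j)) ->
  coupling Ps (fun th (yy : joint_sig Y) => \prod_j Ps j th (yy j)).
Proof.
move=> Ps_exp; split=> [th|th j y].
  split=> [yy|]; first by apply: prodr_ge0 => j _; case: (Ps_exp j th).
  rewrite (sum_dffun_prod (fun j y => Ps j th y)) big1 // => j _.
  by case: (Ps_exp j th).
(* weight the j-th factor by the indicator of the value y *)
pose F i (z : Y i) := Ps i th z * (if i == j then (Tagged Y z == Tagged Y y)%:R else 1).
transitivity (\sum_(yy : joint_sig Y) \prod_i F i (yy i)).
  rewrite big_mkcond /=; apply: eq_bigr => yy _.
  rewrite [RHS](bigD1 j) //= /F eqxx eq_Tagged /= (bigD1 j) //=.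
  under [in RHS]eq_bigr => i /negPf i_j do rewrite i_j mulr1.
  by case: eqP => _; rewrite ?mulr1 ?mulr0 ?mul0r.
rewrite sum_dffun_prod (bigD1 j) //= [X in _ * X]big1 ?mulr1; last first.
  move=> i /negPf i_j; rewrite /F; under eq_bigr do rewrite i_j mulr1.
  by case: (Ps_exp i th).
rewrite /F eqxx; under eq_bigr do rewrite eq_Tagged /=.
by rewrite (bigD1 y) //= eqxx mulr1 big1 ?addr0 // => z /negPf ->; rewrite mulr0.
Qed.

End Couplings.

Section Values.
Variables (R : realType) (Theta : finType).

Lemma dirac_dist (T : finType) (t0 : T) : is_dist (fun t => (t == t0)%:R : R).
Proof.
split=> [t|]; first by rewrite ler0n.
by rewrite -[RHS](sum_delta t0 (fun _ => 1 : R)); apply: eq_bigr => t _; rewrite mulr1.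
Qed.

Lemma mixed_u_bound (A : finType) (u : Theta -> A -> R) th al : is_dist al ->
  `|mixed_u u th al| <= \sum_a `|u th a|.
Proof.
case=> al_ge0 al_sum; apply: le_trans (ler_norm_sum _ _ _) _.
apply: ler_sum => a _; rewrite normrM ger0_norm // ler_piMl //.
by rewrite -al_sum (bigD1 a) //= lerDl; apply: sumr_ge0.
Qed.

Lemma payoff_bound (Y A : finType) (u : Theta -> A -> R) P (s : Y -> A -> R) :
  is_experiment P -> is_strategy s ->
  `|payoff u P s| <= \sum_th \sum_a `|u th a|.
Proof.
move=> P_exp s_str; apply: le_trans (ler_norm_sum _ _ _) _.
apply: ler_sum => th _; apply: le_trans (ler_norm_sum _ _ _) _.
have [P_ge0 P_sum] := P_exp th.
rewrite -[leRHS]mul1r -P_sum mulr_suml; apply: ler_sum => y _.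
by rewrite normrM ger0_norm // ler_wpM2l // mixed_u_bound.
Qed.

Definition pure_payoff (Y A : finType) (P : Theta -> Y -> R) (u : Theta -> A -> R)
    (f : Y -> A) : R :=
  \sum_th \sum_y P th y * u th (f y).

Lemma pure_payoffE (Y A : finType) P (u : Theta -> A -> R) (f : Y -> A) :
  pure_payoff P u f = payoff u P (fun y a => (a == f y)%:R).
Proof.
by apply: eq_bigr => th _; apply: eq_bigr => y _; rewrite /mixed_u sum_delta.
Qed.

Lemma Vsingle_best (Y A : finType) (P : Theta -> Y -> R) (u : Theta -> A -> R) (a0 : A) :
  exists f : Y -> A, Vsingle P u = pure_payoff P u f /\
    forall s, is_strategy s -> payoff u P s <= pure_payoff P u f.
Proof.
(* conditional on each signal, choose an action maximizing the posterior payoff *)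
pose h y a := \sum_th P th y * u th a.
have /choice[f f_max] : forall y, exists b, forall a, h y a <= h y b.
  move=> y; have [b _ hb] := @eq_bigmax _ _ _ (\big[Num.min/h y a0]_a h y a) a0
    xpredT (h y) isT (fun i _ => bigmin_le _ _ _).
  by exists b => a; rewrite -hb; apply: le_bigmax.
have payoffE s : payoff u P s = \sum_y \sum_a s y a * h y a.
  rewrite /payoff /mixed_u exchange_big; apply: eq_bigr => y _.
  under eq_bigr do rewrite mulr_sumr.
  rewrite exchange_big; apply: eq_bigr => a _; rewrite /h mulr_sumr.
  by apply: eq_bigr => th _; rewrite mulrCA mulrA.
have f_best s : is_strategy s -> payoff u P s <= pure_payoff P u f.
  move=> s_str; rewrite pure_payoffE !payoffE; apply: ler_sum => y _.
  have [s_ge0 s_sum] := s_str y.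
  rewrite sum_delta -[leRHS]mul1r -s_sum mulr_suml.
  by apply: ler_sum => a _; apply: ler_wpM2l.
exists f; split => //; apply/le_anti/andP; split.
  apply: ge_sup; first by exists (pure_payoff P u f), (fun y a => (a == f y)%:R);
    rewrite pure_payoffE; split => // y; apply: dirac_dist.
  by move=> v [s [s_str ->]]; apply: f_best.
apply: ub_le_sup; last by exists (fun y a => (a == f y)%:R); rewrite pure_payoffE;
  split => // y; apply: dirac_dist.
by exists (pure_payoff P u f) => v [s [s_str ->]]; apply: f_best.
Qed.

Lemma pure_payoff_le_Vsingle (Y A : finType) (P : Theta -> Y -> R)
    (u : Theta -> A -> R) (a0 : A) (f : Y -> A) :
  pure_payoff P u f <= Vsingle P u.
Proof.
have [g [-> g_best]] := Vsingle_best P u a0.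
by rewrite pure_payoffE; apply: g_best => y; apply: dirac_dist.
Qed.

Lemma experiment_signals_nonempty (Y : finType) (P : Theta -> Y -> R) (th0 : Theta) :
  is_experiment P -> (0 < #|Y|)%N.
Proof.
case/(_ th0) => _ P_sum; apply/card_gt0P; apply: contrapT => Y0.
move: P_sum; rewrite big1 => [/eqP|y _]; first by rewrite eq_sym oner_eq0.
by case: Y0; exists y.
Qed.

End Values.

Section JointValue.
Variables (R : realType) (Theta A : finType) (u : Theta -> A -> R) (a0 : A).
Variables (m : nat) (Y : 'I_m -> finType) (Ps : forall j : 'I_m, Theta -> Y j -> R).
Arguments Ps : clear implicits.
Hypothesis Ps_exp : forall j, is_experiment (Ps j).
Local Open Scope classical_set_scope.

Definition guarantee (s : joint_sig Y -> A -> R) : R :=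
  inf [set w | exists P, coupling Ps P /\ w = payoff u P s].

Lemma guarantee_le s P : is_strategy s -> coupling Ps P -> guarantee s <= payoff u P s.
Proof.
move=> s_str P_cpl; apply: ge_inf; last by exists P.
exists (- \sum_th \sum_a `|u th a|) => _ [Q [Q_cpl ->]].
by move: (payoff_bound u Q_cpl.1 s_str); rewrite ler_norml => /andP[].
Qed.

Lemma Vmulti_ge s v : is_strategy s ->
  (forall P, coupling Ps P -> v <= payoff u P s) -> v <= Vmulti Ps u.
Proof.
move=> s_str v_le; have [P0 P0_cpl] := ex_intro _ _ (product_coupling Ps_exp).
apply: le_trans (_ : guarantee s <= _).
  apply: lb_le_inf => [|_ [P [P_cpl ->]]]; last exact: v_le.
  by exists (payoff u P0 s), P0.
apply: ub_le_sup; last by exists s.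
exists (\sum_th \sum_a `|u th a|) => _ [s' [s'_str ->]].
apply: le_trans (guarantee_le s'_str P0_cpl) _.
by move: (payoff_bound u P0_cpl.1 s'_str); rewrite ler_norml => /andP[].
Qed.

Lemma Vmulti_le_best_payoff pi : coupling Ps pi ->
  exists s, is_strategy s /\ Vmulti Ps u <= payoff u pi s.
Proof.
move=> pi_cpl; have [f [_ f_best]] := Vsingle_best pi u a0.
exists (fun yy a => (a == f yy)%:R); split=> [yy|]; first exact: dirac_dist.
rewrite -pure_payoffE; apply: ge_sup => [|_ [s [s_str ->]]].
  by exists (guarantee (fun _ a => (a == a0)%:R)), (fun _ a => (a == a0)%:R);
    split=> // yy; apply: dirac_dist.
by apply: le_trans (guarantee_le s_str pi_cpl) (f_best s s_str).
Qed.

Lemma Vmulti_no_states : #|Theta| = 0%N -> Vmulti Ps u = 0.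
Proof.
move=> Theta0; have payoff0 P s : payoff u P s = 0.
  by rewrite /payoff big1 // => th; move: (card0_eq Theta0 th); rewrite !inE.
have [P0 P0_cpl] := ex_intro _ _ (product_coupling Ps_exp).
have s0_str : is_strategy (fun (_ : joint_sig Y) a => (a == a0)%:R : R).
  by move=> yy; apply: dirac_dist.
apply/le_anti/andP; split.
  by have [s [_]] := Vmulti_le_best_payoff P0_cpl; rewrite payoff0.
by apply: (Vmulti_ge s0_str) => P _; rewrite payoff0.
Qed.

End JointValue.

Section MinimaxLP.
Variables (R : realType) (Theta A : finType) (u : Theta -> A -> R) (a0 : A).
Variables (m : nat) (j0 : 'I_m) (Y : 'I_m -> finType).
Variable Ps : forall j : 'I_m, Theta -> Y j -> R.
Arguments Ps : clear implicits.
Hypothesis Ps_exp : forall j, is_experiment (Ps j).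

(* Unknowns of the linear program: a strategy s(yy, a) on joint signals and,
   for each experiment j, a function g_j(th, y) of the state and the j-th signal. *)
Definition lp_var : finType :=
  (joint_sig Y * A + {j : 'I_m & (Theta * Y j)%type})%type.

Definition lp_s (x : lp_var -> R) (yy : joint_sig Y) (a : A) : R := x (inl (yy, a)).
Definition lp_g (x : lp_var -> R) (j : 'I_m) (th : Theta) (y : Y j) : R :=
  x (inr (existT _ j (th, y))).
Arguments lp_g : clear implicits.
(* The constraints, in order: s(yy, a) >= 0;  sum_a s(yy, a) <= 1 and >= 1;
   sum_j g_j(th, yy_j) <= u(th, s(yy));  sum_j E_{P_j}[g_j] >= be. *)
Definition lp_con : finType :=
  (joint_sig Y * A + (joint_sig Y + (joint_sig Y + (Theta * joint_sig Y + unit))))%type.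

Definition lp_lhs (c : lp_con) (s : joint_sig Y -> A -> R)
    (g : forall j, Theta -> Y j -> R) : R :=
  match c with
  | inl (yy, a) => - s yy a
  | inr (inl yy) => \sum_a s yy a
  | inr (inr (inl yy)) => - \sum_a s yy a
  | inr (inr (inr (inl (th, yy)))) => \sum_j g j th (yy j) - mixed_u u th (s yy)
  | inr (inr (inr (inr _))) => - \sum_j \sum_th \sum_y Ps j th y * g j th y
  end.

Definition lp_rhs (be : R) (c : lp_con) : R :=
  match c with
  | inl _ => 0 | inr (inl _) => 1 | inr (inr (inl _)) => -1
  | inr (inr (inr (inl _))) => 0 | inr (inr (inr (inr _))) => - be
  end.

Definition lp_coef (c : lp_con) (v : lp_var) : R :=
  match c, v with
  | inl p, inl q => - (q == p)%:R
  | inr (inl yy), inl q => (q.1 == yy)%:R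
  | inr (inr (inl yy)), inl q => - (q.1 == yy)%:R
  | inr (inr (inr (inl p))), inl q => - ((q.1 == p.2)%:R * u p.1 q.2)
  | inr (inr (inr (inl p))), inr (existT j q) => (q.1 == p.1)%:R * (q.2 == p.2 j)%:R
  | inr (inr (inr (inr _))), inr (existT j q) => - Ps j q.1 q.2
  | _, _ => 0
  end.

Lemma sum_lp_var (F : lp_var -> R) : \sum_v F v =
  \sum_(p : joint_sig Y * A) F (inl p) +
  \sum_j \sum_(q : Theta * Y j) F (inr (existT _ j q)).
Proof.
rewrite big_sumType; congr (_ + _).
rewrite (@sig_big_dep _ _ _ _ (fun j => (Theta * Y j)%type : finType) (fun _ => true)
  (fun _ _ => true) (fun j q => F (inr (existT _ j q)))) /=.
by apply: eq_bigr => -[j q].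
Qed.

Lemma sum_lp_con (F : lp_con -> R) : \sum_c F c =
  \sum_(p : joint_sig Y * A) F (inl p) + \sum_yy F (inr (inl yy)) +
  \sum_yy F (inr (inr (inl yy))) +
  \sum_(p : Theta * joint_sig Y) F (inr (inr (inr (inl p)))) + F (inr (inr (inr (inr tt)))).
Proof. by rewrite !big_sumType (big_pred1 tt) /= ?addrA //; case. Qed.

Lemma lp_rowE c x : \sum_v lp_coef c v * x v = lp_lhs c (lp_s x) (lp_g x).
Proof.
rewrite sum_lp_var; case: c => [[yy a]|[yy|[yy|[[th yy]|[]]]]] /=.
- rewrite [X in _ + X]big1 ?addr0; last by move=> j _; rewrite big1 // => q; rewrite mul0r.
  by under eq_bigr do rewrite mulNr; rewrite sumrN sum_delta.
- rewrite [X in _ + X]big1 ?addr0; last by move=> j _; rewrite big1 // => q; rewrite mul0r.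
  rewrite sum_pair /=.
  by under eq_bigr do rewrite -mulr_sumr; rewrite sum_delta.
- rewrite [X in _ + X]big1 ?addr0; last by move=> j _; rewrite big1 // => q; rewrite mul0r.
  under eq_bigr do rewrite mulNr; rewrite sumrN sum_pair /=.
  by under eq_bigr do rewrite -mulr_sumr; rewrite sum_delta.
- rewrite addrC; congr (_ + _).
    apply: eq_bigr => j _; rewrite sum_pair /=.
    under eq_bigr do under eq_bigr do rewrite -mulrA.
    by under eq_bigr do rewrite -mulr_sumr; rewrite !sum_delta.
  rewrite sum_pair /=.
  under eq_bigr do under eq_bigr do rewrite mulNr -mulrA.
  under eq_bigr do rewrite sumrN -mulr_sumr.
  rewrite sumrN sum_delta; congr (- _).
  by apply: eq_bigr => a _; rewrite mulrC.
- rewrite [X in X + _]big1 ?add0r; last by move=> p _; rewrite mul0r.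
  under eq_bigr do under eq_bigr do rewrite mulNr.
  under eq_bigr do rewrite sumrN.
  by rewrite sumrN; congr (- _); apply: eq_bigr => j _; rewrite sum_pair.
Qed.

Lemma lp_solution be x : solves lp_coef (lp_rhs be) x ->
  [/\ is_strategy (lp_s x),
      forall th (yy : joint_sig Y), \sum_j lp_g x j th (yy j) <= mixed_u u th (lp_s x yy)
    & be <= \sum_j \sum_th \sum_y Ps j th y * lp_g x j th y].
Proof.
move=> x_sol; have row c : lp_lhs c (lp_s x) (lp_g x) <= lp_rhs be c.
  by rewrite -lp_rowE; apply: x_sol.
split.
- move=> yy; split=> [a|]; first by have := row (inl (yy, a)); rewrite /= oppr_le0.
  by apply/le_anti; rewrite (row (inr (inl yy))) -lerN2 (row (inr (inr (inl yy)))).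
- by move=> th yy; have := row (inr (inr (inr (inl (th, yy))))); rewrite /= subr_le0.
- by have := row (inr (inr (inr (inr tt)))); rewrite /= lerN2.
Qed.

Section Dual.
Variables (be : R) (l : lp_con -> R).
Hypothesis l_cert : certificate lp_coef (lp_rhs be) l.

(* The multipliers of the constraint families: nu for s >= 0, w for
   sum_a s = 1, pi for the domination constraints and t for the value. *)
Let nu yy a := l (inl (yy, a)).
Let w yy := l (inr (inl yy)) - l (inr (inr (inl yy))).
Let pi th yy := l (inr (inr (inr (inl (th, yy))))).
Let t := l (inr (inr (inr (inr tt)))).

Let l_ge0 c : 0 <= l c. Proof. by case: l_cert. Qed.

(* The column of s(yy, a) in the certificate vanishes. *)
Lemma dual_s_column yy a : \sum_th pi th yy * u th a = w yy - nu yy a.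
Proof.
have colE : \sum_c l c * lp_coef c (inl (yy, a)) =
    - nu yy a + w yy - \sum_th pi th yy * u th a.
  rewrite sum_lp_con /= mulr0 addr0 !sum_mulN !sum_delta_r /w !addrA.
  congr (_ - _); rewrite sum_pair; apply: eq_bigr => th _ /=.
  by under eq_bigr do rewrite mulrA; rewrite -mulr_suml sum_delta_r.
have [_ /(_ (inl (yy, a)))] := l_cert; rewrite colE => col _; lra.
Qed.

(* The column of g_j(th, y) vanishes: pi has marginals t P_j. *)
Lemma dual_g_column th j (y : Y j) :
  \sum_(yy : joint_sig Y | yy j == y) pi th yy = t * Ps j th y.
Proof.
have colE : \sum_c l c * lp_coef c (inr (existT _ j (th, y))) =
    \sum_(yy : joint_sig Y | yy j == y) pi th yy - t * Ps j th y.
  rewrite sum_lp_con /= !sum_mul0 !add0r mulrN; congr (_ - _).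
  rewrite sum_pair (bigD1 th) //= [X in _ + X]big1 ?addr0; last first.
    move=> th' th'_th; rewrite big1 // => yy _.
    by rewrite eq_sym (negPf th'_th) mul0r mulr0.
  rewrite [RHS]big_mkcond /=; apply: eq_bigr => yy _; rewrite eqxx mul1r eq_sym.
  by case: eqP; rewrite ?mulr1 ?mulr0.
have [_ /(_ (inr (existT _ j (th, y))))] := l_cert; rewrite colE => col _; lra.
Qed.

(* The certificate's value row: sum_yy w(yy) - t be < 0. *)
Lemma dual_value : \sum_yy w yy < t * be.
Proof.
have [_ _] := l_cert; rewrite sum_lp_con /= !sum_mul0 add0r addr0 sum_mulN.
by rewrite -!mulr_suml !mulr1 /w /t sumrB mulrN; lra.
Qed.

Lemma dual_payoff s : is_strategy s -> payoff u pi s <= \sum_yy w yy.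
Proof.
move=> s_str; rewrite /payoff exchange_big; apply: ler_sum => yy _ /=.
have [s_ge0 s_sum] := s_str yy.
have -> : \sum_th pi th yy * mixed_u u th (s yy) = \sum_a s yy a * (w yy - nu yy a).
  rewrite /mixed_u; under eq_bigr do rewrite mulr_sumr.
  rewrite exchange_big; apply: eq_bigr => a _ /=.
  by under eq_bigr do rewrite mulrCA; rewrite -mulr_sumr dual_s_column.
rewrite -[leRHS]mul1r -s_sum mulr_suml; apply: ler_sum => a _.
by apply: ler_wpM2l => //; rewrite gerDl oppr_le0 l_ge0.
Qed.

Lemma dual_mass th : \sum_yy pi th yy = t.
Proof.
rewrite (sum_joint_by_coord j0); under eq_bigr do rewrite dual_g_column.
by rewrite -mulr_sumr (Ps_exp j0 th).2 mulr1.
Qed.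

Hypothesis value_ge :
  forall pi, coupling Ps pi -> exists s, is_strategy s /\ be <= payoff u pi s.

(* If t > 0 then pi / t is a coupling against which every strategy earns less than
   be; if t = 0 then pi = 0 and the value row is violated. *)
Lemma no_certificate : False.
Proof.
have [t_gt0|t_le0] := ltrP 0 t.
  pose pi' th yy := pi th yy / t.
  have pi'_cpl : coupling Ps pi'.
    split=> [th|th j y]; last by rewrite -mulr_suml dual_g_column mulrC mulKf ?gt_eqF.
    split=> [yy|]; first by rewrite divr_ge0 ?l_ge0.
    by rewrite -mulr_suml dual_mass divff ?gt_eqF.
  have [s [s_str]] := value_ge pi'_cpl.
  have -> : payoff u pi' s = payoff u pi s / t.
    rewrite /payoff mulr_suml; apply: eq_bigr => th _; rewrite mulr_suml.
    by apply: eq_bigr => yy _; rewrite mulrAC.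
  rewrite ler_pdivlMr // => be_le.
  by have := dual_payoff s_str; have := dual_value; nra.
have t0 : t = 0 by apply/le_anti; rewrite t_le0 l_ge0.
have pi0 th yy : pi th yy = 0.
  apply/eqP; move: (dual_mass th); rewrite t0 => /eqP.
  rewrite psumr_eq0 => [|yy' _]; last exact: l_ge0.
  by move=> /allP/(_ yy (mem_index_enum _))/implyP/(_ isT).
have w_ge0 yy : 0 <= w yy.
  have := dual_s_column yy a0; under eq_bigr do rewrite pi0 mul0r.
  by rewrite big1_eq => /eqP; rewrite eq_sym subr_eq0 => /eqP ->; apply: l_ge0.
have := dual_value; rewrite t0 mul0r ltNge => /negP; apply.
by apply: sumr_ge0 => yy _; apply: w_ge0.
Qed.

End Dual.

Lemma dual_decomposition be :
  (forall pi, coupling Ps pi -> exists s, is_strategy s /\ be <= payoff u pi s) ->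
  exists (s : joint_sig Y -> A -> R) (g : forall j, Theta -> Y j -> R),
    [/\ is_strategy s,
       forall th (yy : joint_sig Y), \sum_j g j th (yy j) <= mixed_u u th (s yy)
     & be <= \sum_j \sum_th \sum_y Ps j th y * g j th y].
Proof.
move=> value_ge.
case: (pselect (exists x, solves lp_coef (lp_rhs be) x)) => [[x /lp_solution sol]|no_sol].
  by exists (lp_s x), (lp_g x).
by have [l l_cert] := farkas no_sol; case: (no_certificate l_cert value_ge).
Qed.

End MinimaxLP.

Section Decomposition.
Variables (R : realType) (Theta A : finType) (u : Theta -> A -> R).
Variables (k : nat) (D : 'I_k -> dproblem R Theta) (sigma : comp_act D -> A -> R).
Hypothesis sigma_str : is_strategy sigma.
Hypothesis sigma_dom : forall th a, comp_u D th a <= mixed_u u th (sigma a).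

Lemma domination_weak_decomposition : weak_decomposition u D.
Proof.
move=> x [al [[al_ge0 al_sum] x_le]]; exists (fun a => \sum_c al c * sigma c a); split.
  split=> [a|]; first by apply: sumr_ge0 => c _; rewrite mulr_ge0 //; case: (sigma_str c).
  rewrite exchange_big /= -al_sum; apply: eq_bigr => c _.
  by rewrite -mulr_sumr (sigma_str c).2 mulr1.
move=> th; apply: le_trans (x_le th) _; rewrite /mixed_u sum_mul_exchange.
by apply: ler_sum => c _; apply: ler_wpM2l.
Qed.

Variables (m : nat) (Y : 'I_m -> finType) (Ps : forall j : 'I_m, Theta -> Y j -> R).
Arguments Ps : clear implicits.

(* For each component l, observe the experiment J l and play f l on its signal;
   the resulting composite action is then mixed into A through sigma. *)
Variables (J : 'I_k -> 'I_m) (f : forall l, Y (J l) -> dp_act (D l)).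
Arguments f : clear implicits.

Definition composite_policy (yy : joint_sig Y) : comp_act D :=
  @finfun _ (fun l => dp_act (D l)) (fun l => f l (yy (J l))).

Lemma composite_policy_payoff P : coupling Ps P ->
  \sum_l pure_payoff (Ps (J l)) (dp_u (D l)) (f l) <=
  payoff u P (fun yy => sigma (composite_policy yy)).
Proof.
move=> P_cpl; have -> : \sum_l pure_payoff (Ps (J l)) (dp_u (D l)) (f l) =
    \sum_th \sum_yy P th yy * comp_u D th (composite_policy yy).
  under [RHS]eq_bigr do under eq_bigr do rewrite mulr_sumr.
  under [RHS]eq_bigr do rewrite exchange_big.
  rewrite [RHS]exchange_big; apply: eq_bigr => l _; apply: eq_bigr => th _.
  rewrite -(coupling_marginal th (fun y => dp_u (D l) th (f l y)) P_cpl).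
  by apply: eq_bigr => yy _; rewrite ffunE.
apply: ler_sum => th _; apply: ler_sum => yy _; apply: ler_wpM2l => //.
by case: (P_cpl.1 th).
Qed.

End Decomposition.

Lemma bigmax_attained (disp : Order.disp_t) (T : orderType disp) (I : finType)
    (F : I -> T) (i0 : I) :
  exists i, \big[Order.max/F i0]_j F j = F i.
Proof.
apply: (big_ind (fun x => exists i, x = F i)); first by exists i0.
  by move=> _ _ [i ->] [i' ->]; case: (leP (F i) (F i')); [exists i' | exists i].
by move=> i _; exists i.
Qed.

Lemma decomposition_value_le (R : realType) (Theta A : finType) (u : Theta -> A -> R)
    (m : nat) (j0 : 'I_m) (Y : 'I_m -> finType) (Ps : forall j : 'I_m, Theta -> Y j -> R)
    (Ps_exp : forall j, is_experiment (Ps j))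
    (k : nat) (D : 'I_k -> dproblem R Theta) (sigma : comp_act D -> A -> R) :
  is_strategy sigma -> (forall th a, comp_u D th a <= mixed_u u th (sigma a)) ->
  \sum_(l < k) \big[Num.max/Vsingle (Ps j0) (dp_u (D l))]_(j < m)
                  Vsingle (Ps j) (dp_u (D l))
    <= Vmulti Ps u.
Proof.
move=> sigma_str sigma_dom.
pose J l := projT1 (cid (bigmax_attained (fun j => Vsingle (Ps j) (dp_u (D l))) j0)).
have J_max l : \big[Num.max/Vsingle (Ps j0) (dp_u (D l))]_(j < m)
    Vsingle (Ps j) (dp_u (D l)) = Vsingle (Ps (J l)) (dp_u (D l)).
  by rewrite /J; case: cid.
have best l : exists f : Y (J l) -> dp_act (D l),
    Vsingle (Ps (J l)) (dp_u (D l)) = pure_payoff (Ps (J l)) (dp_u (D l)) f.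
  have /card_gt0P[a0 _] := dp_ne (D l).
  by have [f [-> _]] := Vsingle_best (Ps (J l)) (dp_u (D l)) a0; exists f.
pose f l := projT1 (cid (best l)).
rewrite (eq_bigr _ (fun l _ => J_max l)).
rewrite (eq_bigr _ (fun l _ => projT2 (cid (best l)))).
apply: (Vmulti_ge Ps_exp (s := fun yy => sigma (composite_policy f yy))).
  by move=> yy; apply: sigma_str.
by move=> P P_cpl; apply: composite_policy_payoff.
Qed.

Unset Implicit Arguments. Set Strict Implicit.

Theorem theorem3 (R : realType) (Theta : finType)
  (A : finType) (u : Theta -> A -> R) (hA : (0 < #|A|)%N)
  (m : nat) (hm : (0 < m)%N) (Y : 'I_m -> finType)
  (Ps : forall j : 'I_m, Theta -> Y j -> R)
  (hPs : forall j, is_experiment (Ps j)) :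
  exists (k : nat) (D : 'I_k -> dproblem R Theta),
    weak_decomposition u D /\
    Vmulti Ps u =
      \sum_(l < k) \big[Num.max/Vsingle (Ps (Ordinal hm)) (dp_u (D l))]_(j < m)
                      Vsingle (Ps j) (dp_u (D l)).
Proof.
have /card_gt0P[a0 _] := hA.
have [Theta0|/card_gt0P[th0 _]] := posnP #|Theta|.
  exists 0%N, (fun _ => DP u hA); split; last first.
    by rewrite big_ord0 (Vmulti_no_states u a0 hPs).
  apply: (domination_weak_decomposition (sigma := fun _ a => (a == a0)%:R)).
    by move=> c; apply: dirac_dist.
  by move=> th; move: (card0_eq Theta0 th); rewrite !inE.
have Y_ne j : (0 < #|Y j|)%N := experiment_signals_nonempty th0 (hPs j).
have [s [g [s_str g_dom g_val]]] :=
  dual_decomposition a0 (Ordinal hm) hPs (@Vmulti_le_best_payoff _ _ _ u a0 _ _ Ps).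
(* the decomposition: one problem (Y_j, g_j) per experiment *)
pose D j := DP (g j) (Y_ne j).
exists m, D; split.
  exact: (@domination_weak_decomposition _ _ _ u _ D s s_str g_dom).
apply/le_anti/andP; split; last first.
  exact: (@decomposition_value_le _ _ _ u _ _ _ _ hPs _ D s s_str g_dom).
(* V <= sum_j E_{P_j}[g_j] <= sum_j V(P_j; D_j) <= sum_j max_i V(P_i; D_j) *)
apply: le_trans g_val _; apply: ler_sum => j _; apply: le_trans (le_bigmax _ _ j).
have /card_gt0P[y0 _] := Y_ne j.
exact: (pure_payoff_le_Vsingle _ _ y0 (fun y => y)).
Qed.
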